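(* Let $n \ge 1$ and $d \ge 1$ be integers and let $\Phi$ be a real $N \times d$ matrix satisfying the Restricted Isometry Condition with parameters $(2n, \varepsilon)$ for $\varepsilon = 0.03/\sqrt{\log n}$. Let $v \in \mathbb{R}^d$ be $n$-sparse, and let $x = \Phi v$. Then ROMP, run on input $x$ and sparsity level $n$, terminates in at most $n$ iterations and outputs a set $I \subset \{1,\dots,d\}$ such that $\mathrm{supp}(v) \subset I$ and $|I| \le 2n$.
   Context: A vector $v \in \mathbb{R}^d$ is $n$-sparse if $|\mathrm{supp}(v)| \le n$, where $\mathrm{supp}(v) = \{i : v_i \neq 0\}$. A matrix $\Phi$ satisfies the Restricted Isometry Condition (RIC) with parameters $(m,\varepsilon)$, $\varepsilon \in (0,1)$, if $(1-\varepsilon)\|w\|_2 \le \|\Phi w\|_2 \le (1+\varepsilon)\|w\|_2$ for all $m$-sparse $w \in \mathbb{R}^d$. For $I \subset \{1,\dots,d\}$, $\Phi_I$ denotes the submatrix of $\Phi$ formed by the columns indexed by $I$, and for a vector $y$, $y|_T$ denotes its restriction to the coordinates in $T$. The algorithm ROMP (Regularized Orthogonal Matching Pursuit), with input a measurement vector $x \in \mathbb{R}^N$ and sparsity level $n$, is: Initialize $I = \emptyset$ and residual $r = x$. Repeat the following until $r = 0$: (Identify) let $u = \Phi^* r$ and choose a set $J$ of the $n$ biggest coordinates of $u$ in magnitude, or all nonzero coordinates of $u$, whichever set is smaller; (Regularize) among all subsets $J_0 \subset J$ with comparable coordinates, i.e. $|u(i)| \le 2|u(j)|$ for all $i,j \in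 J_0$, choose one with maximal energy $\|u|_{J_0}\|_2$; (Update) set $I \leftarrow I \cup J_0$, $y = \operatorname{argmin}_{z \in \mathbb{R}^I} \|x - \Phi z\|_2$ (i.e. $z$ supported on $I$), and $r = x - \Phi y$. The output is the final set $I$. *)

From mathcomp Require Import all_boot all_order all_algebra.
From mathcomp Require Import all_classical all_reals all_analysis.
Set Implicit Arguments. Unset Strict Implicit. Unset Printing Implicit Defensive.
Import Order.TTheory GRing.Theory Num.Theory.
Local Open Scope ring_scope.

Section ROMP.
Variable R : realType.

Definition norm2 (m : nat) (w : 'cV[R]_m) : R :=
  Num.sqrt (\sum_(i < m) (w i 0) ^+ 2).

Definition supp (m : nat) (w : 'cV[R]_m) : {set 'I_m} :=
  [set i | w i 0 != 0].

Definition sparse (m n : nat) (w : 'cV[R]_m) : Prop := (#|supp w| <= n)%N.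

Definition RIC (N d : nat) (Phi : 'M[R]_(N, d)) (m : nat) (eps : R) : Prop :=
  0 < eps < 1 /\
  forall w : 'cV[R]_d, sparse m w ->
    (1 - eps) * norm2 w <= norm2 (Phi *m w) <= (1 + eps) * norm2 w.

Definition restrict (m : nat) (y : 'cV[R]_m) (T : {set 'I_m}) : 'cV[R]_m :=
  \col_i (if i \in T then y i 0 else 0).

Definition is_residual (N d : nat) (Phi : 'M[R]_(N, d)) (x : 'cV[R]_N)
    (I : {set 'I_d}) (r : 'cV[R]_N) : Prop :=
  exists y : 'cV[R]_d,
    supp y \subset I /\ r = x - Phi *m y /\
    forall z : 'cV[R]_d, supp z \subset I ->
      norm2 (x - Phi *m y) <= norm2 (x - Phi *m z).

Definition identify (d n : nat) (u : 'cV[R]_d) (J : {set 'I_d}) : Prop :=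
  if (#|supp u| <= n)%N then J = supp u
  else #|J| = n /\
       forall i j, i \in J -> j \notin J -> `|u j 0| <= `|u i 0|.

Definition comparable (d : nat) (u : 'cV[R]_d) (J0 : {set 'I_d}) : Prop :=
  forall i j, i \in J0 -> j \in J0 -> `|u i 0| <= 2 * `|u j 0|.

Definition regularize (d : nat) (u : 'cV[R]_d) (J J0 : {set 'I_d}) : Prop :=
  J0 \subset J /\ comparable u J0 /\
  forall J1 : {set 'I_d}, J1 \subset J -> comparable u J1 ->
    norm2 (restrict u J1) <= norm2 (restrict u J0).

Definition romp_step (N d : nat) (Phi : 'M[R]_(N, d)) (x : 'cV[R]_N) (n : nat)
    (I I' : {set 'I_d}) : Prop :=
  exists r : 'cV[R]_N, is_residual Phi x I r /\ r != 0 /\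
  exists J J0 : {set 'I_d},
    identify n (Phi^T *m r) J /\ regularize (Phi^T *m r) J J0 /\
    I' = I :|: J0.

(* Is 0, ..., Is k is a possible execution of k iterations of ROMP
   (for some admissible resolution of the choices in Identify/Regularize). *)
Definition romp_run (N d : nat) (Phi : 'M[R]_(N, d)) (x : 'cV[R]_N) (n : nat)
    (Is : nat -> {set 'I_d}) (k : nat) : Prop :=
  Is 0%N = finset.set0 /\ forall i, (i < k)%N -> romp_step Phi x n (Is i) (Is i.+1).

End ROMP.

From Pilot Require Import Defs.
From mathcomp Require Import all_boot all_order all_algebra.
From mathcomp Require Import all_classical all_reals all_analysis.
From mathcomp Require Import ring lra zify.
Import Order.TTheory GRing.Theory Num.Theory.
Set Implicit Arguments. Unset Strict Implicit.
Local Open Scope ring_scope.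

(* Run on x = Phi v, each iteration of ROMP adds to I a set J0 disjoint from I
   of which at least half lies in supp v.  Indeed the residual is Phi (v - y)
   with y supported on I, and by the RIC the vector u = Phi^T r behaves like
   v - y: u vanishes on I, the identified set J carries energy at least
   (1 - eps)^4 |v - y|^2, regularization keeps a fraction 3/(4L), L ~ log n, of
   it, while n coordinates outside supp v and I carry at most 8 eps^2 |v - y|^2.
   As the coordinates of u on J0 are within a factor 2 of each other, this
   energy gap turns into |J0 \ supp v| <= |J0 /\ supp v|.  So after i
   iterations I /\ supp v has at least i elements and at least as many as
   I \ supp v, which bounds the number of iterations by n and |I| by 2n; at
   termination the RIC on supp v \/ I, of size at most 2n, forces y = v. *)

Lemma cardsUD (T : finType) (A B : {set T}) : #|A :|: B| = (#|A| + #|B :\: A|)%N.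
Proof. by have := cardsUI A B; have := cardsID A B; rewrite finset.setIC; lia. Qed.

Lemma cardsU_disjoint (T : finType) (A B : {set T}) :
  [disjoint A & B] -> #|A :|: B| = (#|A| + #|B|)%N.
Proof. by move=> AB; apply/eqP; rewrite (leq_card_setU A B).2. Qed.

Section EuclideanGeometry.
Variable R : realType.
Implicit Types (m : nat).

Definition dotv m (a b : 'cV[R]_m) : R := \sum_i a i 0 * b i 0.
Definition sqnorm m (w : 'cV[R]_m) : R := \sum_i w i 0 ^+ 2.
Definition energy m (u : 'cV[R]_m) (A : {set 'I_m}) : R := \sum_(i in A) u i 0 ^+ 2.

Lemma sqnorm_ge0 m (w : 'cV[R]_m) : 0 <= sqnorm w.
Proof. by apply: sumr_ge0 => i _; rewrite sqr_ge0. Qed.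

Lemma energy_ge0 m (u : 'cV[R]_m) A : 0 <= energy u A.
Proof. by apply: sumr_ge0 => i _; rewrite sqr_ge0. Qed.

Lemma ler_norm2 m (a b : 'cV[R]_m) : (norm2 a <= norm2 b) = (sqnorm a <= sqnorm b).
Proof. by rewrite ler_sqrt ?sqnorm_ge0. Qed.

Lemma sqnorm_dotv m (w : 'cV[R]_m) : sqnorm w = dotv w w.
Proof. by apply: eq_bigr => i _; rewrite expr2. Qed.

Lemma dotvC m (a b : 'cV[R]_m) : dotv a b = dotv b a.
Proof. by apply: eq_bigr => i _; rewrite mulrC. Qed.

Lemma dotvDl m (a b c : 'cV[R]_m) : dotv (a + b) c = dotv a c + dotv b c.
Proof. by rewrite /dotv -big_split; apply: eq_bigr => i _; rewrite mxE mulrDl. Qed.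

Lemma dotvZl m k (a c : 'cV[R]_m) : dotv (k *: a) c = k * dotv a c.
Proof. by rewrite /dotv mulr_sumr; apply: eq_bigr => i _; rewrite mxE mulrA. Qed.

Lemma dotv_mulmx N d (Phi : 'M[R]_(N, d)) a b :
  dotv (Phi *m a) b = dotv a (Phi^T *m b).
Proof.
rewrite /dotv; under eq_bigr do rewrite !mxE big_distrl /=.
rewrite exchange_big /=; apply: eq_bigr => j _.
rewrite !mxE big_distrr /=; apply: eq_bigr => i _.
by rewrite !mxE; ring.
Qed.

Lemma sqnormD m (a b : 'cV[R]_m) :
  sqnorm (a + b) = sqnorm a + 2 * dotv a b + sqnorm b.
Proof.
rewrite /sqnorm /dotv mulr_sumr -!big_split /=; apply: eq_bigr => i _.
by rewrite !mxE; ring.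
Qed.

Lemma sqnormB m (a b : 'cV[R]_m) :
  sqnorm (a - b) = sqnorm a - 2 * dotv a b + sqnorm b.
Proof.
rewrite /sqnorm /dotv mulr_sumr -sumrN -!big_split /=; apply: eq_bigr => i _.
by rewrite !mxE; ring.
Qed.

Lemma sqnormZ m k (a : 'cV[R]_m) : sqnorm (k *: a) = k ^+ 2 * sqnorm a.
Proof. by rewrite !sqnorm_dotv dotvZl (dotvC a) dotvZl mulrA -expr2. Qed.

Lemma sqnorm_eq0 m (w : 'cV[R]_m) : sqnorm w = 0 -> w = 0.
Proof.
move=> w0; apply/matrixP => i j; rewrite (ord1 j) mxE.
have /eqP := psumr_eq0P (fun i _ => sqr_ge0 (w i 0)) w0 (erefl true) (i := i).
by rewrite sqrf_eq0 => /eqP.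
Qed.

Lemma suppD m (a b : 'cV[R]_m) : supp (a + b) \subset supp a :|: supp b.
Proof.
apply/fintype.subsetP => i; rewrite !inE mxE.
by case: (eqVneq (a i 0) 0) => [->|//]; rewrite add0r.
Qed.

Lemma suppN m (a : 'cV[R]_m) : supp (- a) = supp a.
Proof. by apply/setP => i; rewrite !inE mxE oppr_eq0. Qed.

Lemma suppB m (a b : 'cV[R]_m) : supp (a - b) \subset supp a :|: supp b.
Proof. by rewrite -(suppN b) suppD. Qed.

Lemma suppZ m k (a : 'cV[R]_m) : supp (k *: a) \subset supp a.
Proof.
apply/fintype.subsetP => i; rewrite !inE mxE.
by apply: contra => /eqP ->; rewrite mulr0.
Qed.

Lemma supp_delta m (i : 'I_m) : supp (delta_mx i 0 : 'cV[R]_m) \subset [set i].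
Proof. by apply/fintype.subsetP => j; rewrite !inE mxE; case: (j == i); rewrite ?eqxx. Qed.

Lemma supp_restrict m (x : 'cV[R]_m) (T : {set 'I_m}) : supp (Defs.restrict x T) \subset T.
Proof. by apply/fintype.subsetP => i; rewrite inE mxE; case: (i \in T); rewrite ?eqxx. Qed.

Lemma dotv_supp_disjoint m (a b : 'cV[R]_m) (A B : {set 'I_m}) :
  supp a \subset A -> supp b \subset B -> [disjoint A & B] -> dotv a b = 0.
Proof.
move=> sa sb AB; apply: big1 => i _.
case: (eqVneq (a i 0) 0) => [->|ha]; first by rewrite mul0r.
case: (eqVneq (b i 0) 0) => [->|hb]; first by rewrite mulr0.
have iA : i \in A by rewrite (fintype.subsetP sa) ?inE.
by move: (fintype.subsetP sb i); rewrite inE (disjointFr AB iA) => /(_ hb).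
Qed.

Lemma dotv_delta m (i : 'I_m) (w : 'cV[R]_m) : dotv (delta_mx i 0) w = w i 0.
Proof.
rewrite /dotv (bigD1 i) //= big1 ?addr0; first by rewrite mxE !eqxx mul1r.
by move=> j ji; rewrite mxE (negbTE ji) mul0r.
Qed.

Lemma sqnorm_restrict m (u : 'cV[R]_m) (A : {set 'I_m}) :
  sqnorm (Defs.restrict u A) = energy u A.
Proof.
rewrite /sqnorm /energy [RHS]big_mkcond /=; apply: eq_bigr => i _.
by rewrite mxE; case: (i \in A); rewrite ?expr0n.
Qed.

Lemma dotv_restrict m (u : 'cV[R]_m) (A : {set 'I_m}) :
  dotv (Defs.restrict u A) u = energy u A.
Proof.
rewrite /dotv /energy [RHS]big_mkcond /=; apply: eq_bigr => i _.
by rewrite mxE; case: (i \in A); rewrite ?expr2 ?mul0r.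
Qed.

Lemma energy_set0 m (u : 'cV[R]_m) : energy u finset.set0 = 0.
Proof. by rewrite /energy big_set0. Qed.

Lemma energyS m (u : 'cV[R]_m) (A B : {set 'I_m}) : A \subset B -> energy u A <= energy u B.
Proof.
move=> AB; rewrite /energy [X in _ <= X](big_setID A) /= (finset.setIidPr AB).
by rewrite lerDl sumr_ge0 // => i _; rewrite sqr_ge0.
Qed.

Lemma energy_le_sqnorm m (u : 'cV[R]_m) (A : {set 'I_m}) : energy u A <= sqnorm u.
Proof.
rewrite /sqnorm [X in _ <= X](bigID (mem A)) /= lerDl.
by rewrite sumr_ge0 // => i _; rewrite sqr_ge0.
Qed.

End EuclideanGeometry.

Section RestrictedIsometry.
Variables (R : realType) (N d m : nat) (Phi : 'M[R]_(N, d)) (eps : R).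
Hypothesis HR : RIC Phi m eps.

Lemma RIC_eps_gt0 : 0 < eps.
Proof. by case: HR => /andP[]. Qed.

Lemma RIC_eps_lt1 : eps < 1.
Proof. by case: HR => /andP[]. Qed.

Lemma RIC_sqnorm w : (#|supp w| <= m)%N ->
  (1 - eps) ^+ 2 * sqnorm w <= sqnorm (Phi *m w) <= (1 + eps) ^+ 2 * sqnorm w.
Proof.
case: HR => /andP[e0 e1] isom /isom /andP[lo hi].
have ge0 (c : R) : 0 <= c -> Num.sqrt (c ^+ 2 * sqnorm w) = c * norm2 w.
  by move=> c0; rewrite sqrtrM ?sqr_ge0 // sqrtr_sqr ger0_norm.
have [p q] : 0 <= 1 - eps /\ 0 <= 1 + eps by split; lra.
rewrite -[_ <= sqnorm _]ler_sqrt ?mulr_ge0 ?sqr_ge0 ?sqnorm_ge0 //.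
by rewrite -[sqnorm _ <= _]ler_sqrt ?mulr_ge0 ?sqr_ge0 ?sqnorm_ge0 // !ge0 ?lo ?hi.
Qed.

Lemma RIC_kernel w : (#|supp w| <= m)%N -> Phi *m w = 0 -> w = 0.
Proof.
move=> sw Pw0; apply: sqnorm_eq0; apply/eqP; rewrite eq_le sqnorm_ge0 andbT.
have /andP[lo _] := RIC_sqnorm sw.
have e1 := RIC_eps_lt1.
have q0 : 0 < (1 - eps) ^+ 2 by rewrite exprn_gt0 // subr_gt0.
rewrite -(pmulr_rle0 _ q0); apply: le_trans lo _.
by rewrite Pw0 /sqnorm big1 // => i _; rewrite mxE expr0n.
Qed.

(* Polarization: compare the RIC bounds for a + b and a - b, whose supports
   have the same size. *)
Lemma RIC_near_orthogonal a b (A B : {set 'I_d}) :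
  supp a \subset A -> supp b \subset B -> [disjoint A & B] -> (#|A :|: B| <= m)%N ->
  dotv (Phi *m a) (Phi *m b) <= eps * (sqnorm a + sqnorm b).
Proof.
move=> sa sb AB hAB.
have cardS (w : 'cV[R]_d) : supp w \subset supp a :|: supp b -> (#|supp w| <= m)%N.
  move=> sw; apply: leq_trans hAB.
  exact: subset_leq_card (fintype.subset_trans sw (finset.setUSS sa sb)).
have /andP[_ hiD] := RIC_sqnorm (cardS _ (suppD a b)).
have /andP[loB _] := RIC_sqnorm (cardS _ (suppB a b)).
move: hiD loB; rewrite mulmxDr mulmxBr !sqnormB !sqnormD.
rewrite (dotv_supp_disjoint sa sb AB) => hiD loB.
have e0 := RIC_eps_gt0.
have expand : ((1 + eps) ^+ 2 - (1 - eps) ^+ 2) * (sqnorm a + 2 * 0 + sqnorm b)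
    = 4 * eps * (sqnorm a + sqnorm b) by ring.
lra.
Qed.

End RestrictedIsometry.

(* First-order optimality of the least-squares solution: perturbing y along
   the basis vector e_i, i in I, cannot decrease the residual. *)
Lemma residual_orthogonal (R : realType) N d (Phi : 'M[R]_(N, d)) x I r :
  is_residual Phi x I r -> forall i, i \in I -> (Phi^T *m r) i 0 = 0.
Proof.
case=> y [sy [-> ymin]] i iI.
set g := (Phi^T *m (x - Phi *m y)) i 0.
set e := (delta_mx i 0 : 'cV[R]_d).
set c := sqnorm (Phi *m e).
have c0 : 0 <= c by apply: sqnorm_ge0.
set t := g / (c + 1).
have sz : supp (y + t *: e) \subset I.
  apply: fintype.subset_trans (suppD _ _) _; rewrite finset.subUset sy /=.
  apply: fintype.subset_trans (suppZ _ _) _; apply: fintype.subset_trans (supp_delta R i) _.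
  by rewrite finset.sub1set.
have := ymin _ sz; rewrite ler_norm2.
rewrite mulmxDr opprD addrA -scalemxAr (sqnormB (x - Phi *m y)) sqnormZ.
rewrite (dotvC _ (t *: _)) dotvZl dotv_mulmx dotv_delta -/g -/c => hmin.
have tg : g = t * (c + 1) by rewrite /t mulfVK // lt0r_neq0 // ltr_pwDr.
have : t = 0 by nra.
by rewrite tg => ->; rewrite mul0r.
Qed.

Section EnergyCounting.
Variable R : realType.

Lemma card_mul_sum_le (I : finType) (X Y : {set I}) (f g : I -> R) c :
  (forall i j, i \in X -> j \in Y -> f i <= c * g j) ->
  #|Y|%:R * (\sum_(i in X) f i) <= c * (#|X|%:R * \sum_(j in Y) g j).
Proof.
move=> fg; rewrite !mulr_natl -!sumr_const exchange_big /= mulr_sumr.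
apply: ler_sum => i iX; rewrite mulr_sumr; apply: ler_sum => j jY.
exact: fg.
Qed.

Lemma top_coords_max_energy d n (u : 'cV[R]_d) (J : {set 'I_d}) :
  #|J| = n -> (forall i j, i \in J -> j \notin J -> `|u j 0| <= `|u i 0|) ->
  forall B : {set 'I_d}, (#|B| <= n)%N -> energy u B <= energy u J.
Proof.
move=> cJ top B cB.
rewrite /energy [X in X <= _](big_setID J) [X in _ <= X](big_setID B) /=.
rewrite finset.setIC lerD2l.
rewrite -/(energy u (B :\: J)) -/(energy u (J :\: B)).
have cBJ : (#|B :\: J| <= #|J :\: B|)%N.
  by have := cardsID J B; have := cardsID B J; rewrite finset.setIC; lia.
have swap : #|J :\: B|%:R * energy u (B :\: J) <= 1 * (#|B :\: J|%:R * energy u (J :\: B)).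
  apply: card_mul_sum_le => i j; rewrite !inE => /andP[iJ iB] /andP[jB jJ].
  rewrite mul1r -(real_normK (num_real (u i 0))) -(real_normK (num_real (u j 0))).
  by rewrite ler_sqr ?nnegrE ?normr_ge0 // top.
case: (posnP #|J :\: B|) => [c0|cpos].
  by move: cBJ; rewrite c0 leqn0 cards_eq0 => /eqP ->; rewrite energy_set0 energy_ge0.
rewrite mul1r in swap.
have grow : #|B :\: J|%:R * energy u (J :\: B) <= #|J :\: B|%:R * energy u (J :\: B).
  by rewrite ler_wpM2r ?energy_ge0 // ler_nat.
by have := le_trans swap grow; rewrite ler_pM2l // ltr0n.
Qed.

Lemma identify_max_energy d n (u : 'cV[R]_d) J : identify n u J ->
  [/\ (#|J| <= n)%N, J \subset supp u &
      forall B : {set 'I_d}, (#|B| <= n)%N -> energy u B <= energy u J].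
Proof.
rewrite /identify; case: ifP => small.
  move=> ->; split => // B _.
  rewrite /energy (big_setID (supp u)) /= [X in _ + X]big1 ?addr0.
    by apply: energyS; apply: subsetIr.
  by move=> i; rewrite !inE negbK => /andP[/eqP -> _]; rewrite expr0n.
move=> [cJ top]; split; [by rewrite cJ | | exact: top_coords_max_energy].
apply/fintype.subsetP => i iJ; rewrite inE; apply/negP => /eqP ui0.
have /subsetPn[j js jJ] : ~~ (supp u \subset J).
  by apply/negP => /subset_leq_card; rewrite cJ small.
move: (top i j iJ jJ); rewrite ui0 normr0 normr_le0.
by move: js; rewrite inE => /negbTE ->.
Qed.

Lemma comparable_card_energy d (u : 'cV[R]_d) (J0 X Y : {set 'I_d}) :
  Defs.comparable u J0 -> X \subset J0 -> Y \subset J0 ->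
  #|Y|%:R * energy u X <= 4 * (#|X|%:R * energy u Y).
Proof.
move=> cmp sX sY; have -> : 4 = 2 ^+ 2 :> R by rewrite expr2; lra.
apply: card_mul_sum_le => i j iX jY.
rewrite -(real_normK (num_real (u i 0))) -(real_normK (num_real (u j 0))) -exprMn.
rewrite ler_sqr ?nnegrE ?mulr_ge0 ?normr_ge0 //.
exact: cmp (fintype.subsetP sX i iX) (fintype.subsetP sY j jY).
Qed.

Lemma comparable_card_bound d (u : 'cV[R]_d) (J0 A : {set 'I_d}) :
  Defs.comparable u J0 -> A \subset J0 -> 0 < energy u J0 ->
  8 * energy u A <= energy u J0 -> (2 * #|A| <= #|J0|)%N.
Proof.
move=> cmp sA E0 small.
have count := comparable_card_energy cmp (subxx J0) sA.
have bigJ0 : #|J0|%:R * (8 * energy u A) <= #|J0|%:R * energy u J0.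
  by rewrite ler_wpM2l ?ler0n.
have : (2 * #|A|)%:R * energy u J0 <= #|J0|%:R * energy u J0 by rewrite natrM; nra.
by rewrite ler_pM2r // ler_nat.
Qed.

End EnergyCounting.

Section DyadicClasses.
Variables (R : realType) (d : nat) (u : 'cV[R]_d) (J : {set 'I_d}) (M : R) (L : nat).

Definition dyadic_class k := [set i in J | (2 ^+ k * `|u i 0| <= M) &&
                                           ((k == L) || (M < 2 ^+ k.+1 * `|u i 0|))].

Lemma dyadic_classS k : dyadic_class k \subset J.
Proof. by apply/fintype.subsetP => i; rewrite inE => /andP[]. Qed.

Lemma dyadic_level (a : R) : a <= M ->
  exists2 k, (k <= L)%N & 2 ^+ k * a <= M /\ (k = L \/ M < 2 ^+ k.+1 * a).
Proof.
move=> aM; elim: L => [|l [k kl [ka kl']]]; first by exists 0%N; rewrite ?expr0 ?mul1r; auto.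
case: (lerP (2 ^+ l.+1 * a) M) => al; first by exists l.+1; auto.
exists k; first exact: leqW.
by split=> //; right; case: kl' => [->|].
Qed.

Lemma energy_le_sum_dyadic : (forall i, i \in J -> `|u i 0| <= M) ->
  energy u J <= \sum_(k < L.+1) energy u (dyadic_class k).
Proof.
move=> uM; rewrite /energy.
apply: (@le_trans _ _ (\sum_(i in J) \sum_(k < L.+1)
          (if i \in dyadic_class k then u i 0 ^+ 2 else 0))).
  apply: ler_sum => i iJ.
  have [k kL [ka kl]] := dyadic_level (uM i iJ).
  rewrite (bigD1 (Ordinal (kL : (k < L.+1)%N))) //= ifT.
    by rewrite lerDl sumr_ge0 // => ? _; case: ifP; rewrite // sqr_ge0.
  by rewrite inE iJ ka /=; case: kl => [->|->]; rewrite ?eqxx ?orbT.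
rewrite exchange_big /=; apply: ler_sum => k _.
rewrite [X in _ <= X]big_mkcond [X in X <= _]big_mkcond /=.
by apply: ler_sum => i _; rewrite inE; case: (i \in J).
Qed.

Lemma dyadic_class_comparable k : k != L -> Defs.comparable u (dyadic_class k).
Proof.
move=> kL i j; rewrite !inE (negbTE kL) /= => /andP[_ /andP[iM Mi]] /andP[_ /andP[jM Mj]].
have p0 : 0 < 2 ^+ k :> R by rewrite exprn_gt0.
rewrite exprS in Mi Mj.
have := normr_ge0 (u i 0); have := normr_ge0 (u j 0).
nra.
Qed.

Lemma energy_dyadic_last n : (#|J| <= n)%N -> (4 * n <= 4 ^ L)%N ->
  4 * energy u (dyadic_class L) <= M ^+ 2.
Proof.
move=> cJ hL.
set C := dyadic_class L.
have scaled : (2 ^+ L) ^+ 2 * energy u C <= #|C|%:R * M ^+ 2.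
  rewrite /energy mulr_sumr [X in _ <= X]mulr_natl -sumr_const.
  apply: ler_sum => i; rewrite inE => /andP[_ /andP[iM _]].
  rewrite -(real_normK (num_real (u i 0))) -exprMn.
  have p : 0 <= 2 ^+ L * `|u i 0| by rewrite mulr_ge0 ?exprn_ge0 ?normr_ge0.
  by rewrite ler_sqr ?nnegrE // (le_trans p iM).
have cC : #|C|%:R <= n%:R :> R.
  by rewrite ler_nat; apply: leq_trans cJ; apply/subset_leq_card/dyadic_classS.
have hn : 4 * n%:R <= (2 ^+ L) ^+ 2 :> R.
  rewrite -natrX -natrX -expnM mulnC expnM -[4]/(4%:R) -natrM ler_nat.
  exact: hL.
have p0 : 0 < (2 ^+ L) ^+ 2 :> R by rewrite !exprn_gt0.
have := energy_ge0 u C; have := sqr_ge0 M.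
nra.
Qed.

End DyadicClasses.

(* J splits into L classes with comparable coordinates plus a tail of energy
   at most max_J |u_i|^2 / 4. *)
Lemma regularize_energy (R : realType) d n (u : 'cV[R]_d) (J J0 : {set 'I_d}) L :
  (#|J| <= n)%N -> (4 * n <= 4 ^ L)%N -> regularize u J J0 ->
  3 * energy u J <= 4 * L%:R * energy u J0.
Proof.
move=> cJ hL [_ [_ J0max]].
have maxE (J1 : {set 'I_d}) :
    J1 \subset J -> Defs.comparable u J1 -> energy u J1 <= energy u J0.
  by move=> sJ1 cmp; move: (J0max J1 sJ1 cmp); rewrite ler_norm2 !sqnorm_restrict.
have [->|[i0 i0J]] := set_0Vmem J.
  by rewrite energy_set0 mulr0 mulr_ge0 ?energy_ge0 // mulr_ge0 // ler0n.
pose i1 := [arg max_(i > i0 in J) `|u i 0|]%O.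
have [i1J i1max] : i1 \in J /\ (forall j, j \in J -> `|u j 0| <= `|u i1 0|).
  by rewrite /i1; case: arg_maxP => // i iJ imax; split => // j /imax.
set M := `|u i1 0|.
have cover := energy_le_sum_dyadic L i1max.
rewrite big_ord_recr /= in cover.
have classes : \sum_(k < L) energy u (dyadic_class u J M L (widen_ord (leqnSn L) k))
               <= L%:R * energy u J0.
  rewrite -[L in L%:R]card_ord mulr_natl -sumr_const; apply: ler_sum => k _.
  apply: maxE; first exact: dyadic_classS.
  by apply: dyadic_class_comparable; rewrite neq_ltn /= ltn_ord.
have tail := energy_dyadic_last u M cJ hL.
have MJ : M ^+ 2 <= energy u J.
  rewrite /energy (bigD1 i1) //= /M (real_normK (num_real _)) lerDl.
  by rewrite sumr_ge0 // => ? _; rewrite sqr_ge0.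
lra.
Qed.

(* The constant 256 is what makes the 3/(4L) fraction of energy kept by
   regularization exceed eight times the off-support energy. *)
Lemma energy_gap (R : realType) (eps X EJ E0 W : R) L :
  0 < eps -> eps < 1 -> 0 < X -> 256 * eps ^+ 2 * L%:R <= 3 * (1 - eps) ^+ 4 ->
  (1 - eps) ^+ 4 * X <= EJ -> 3 * EJ <= 4 * L%:R * E0 -> W <= 8 * eps ^+ 2 * X ->
  0 < E0 /\ 8 * W <= E0.
Proof.
move=> e0 e1 X0 hLeps lowJ regJ upW.
have q0 : 0 < (1 - eps) ^+ 4 by rewrite exprn_gt0 // subr_gt0.
have lowE0 : 3 * (1 - eps) ^+ 4 * X <= 4 * L%:R * E0.
  by apply: le_trans regJ; rewrite -mulrA ler_pM2l.
have LE0 : 0 < L%:R * E0 by nra.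
have L0 : 0 < L%:R :> R.
  by case: (posnP L) LE0 => [->|Lp _]; rewrite ?mulr0n ?mul0r ?ltxx // ltr0n.
have E0pos : 0 < E0 by rewrite -(pmulr_rgt0 _ L0).
split=> //; apply: le_trans (_ : 64 * eps ^+ 2 * X <= _).
  have -> : 64 * eps ^+ 2 * X = 8 * (8 * eps ^+ 2 * X) by ring.
  by rewrite ler_pM2l.
have c0 : 0 < 4 * L%:R :> R by rewrite mulr_gt0.
have h := ler_wpM2r (ltW X0) hLeps.
by rewrite -(ler_pM2l c0); lra.
Qed.

Section ROMPStep.
Variables (R : realType) (N d n : nat) (Phi : 'M[R]_(N, d)) (eps : R).
Hypothesis HR : RIC Phi (2 * n) eps.

Lemma residual_energy_lower (S I : {set 'I_d}) (x : 'cV[R]_d) :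
  (#|S| <= n)%N -> (#|I :\: S| <= n)%N -> supp x \subset S :|: I ->
  {in I, forall i, (Phi^T *m (Phi *m x)) i 0 = 0} ->
  (1 - eps) ^+ 4 * sqnorm x <= energy (Phi^T *m (Phi *m x)) (S :\: I).
Proof.
move=> cS cI sx orth; set u := Phi^T *m (Phi *m x); set B := S :\: I.
have cx : (#|supp x| <= 2 * n)%N.
  by apply: leq_trans (subset_leq_card sx) _; rewrite cardsUD; lia.
have /andP[lo _] := RIC_sqnorm HR cx.
have xu : sqnorm (Phi *m x) = \sum_(i in B) x i 0 * u i 0.
  rewrite sqnorm_dotv dotv_mulmx /dotv [RHS]big_mkcond /=; apply: eq_bigr => i _.
  rewrite inE; case: (boolP (i \in I)) => iI /=; first by rewrite orth // mulr0.
  case: (boolP (i \in S)) => iS //=.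
  have : i \notin supp x.
    by apply/negP => /(fintype.subsetP sx); rewrite inE (negbTE iS) (negbTE iI).
  by rewrite inE negbK => /eqP ->; rewrite mul0r.
set s := (1 - eps) ^+ 2.
have s0 : 0 < s by rewrite exprn_gt0 // subr_gt0 (RIC_eps_lt1 HR).
have amgm : 2 * s * (\sum_(i in B) x i 0 * u i 0) <= s ^+ 2 * energy x B + energy u B.
  rewrite /energy !mulr_sumr -big_split /=; apply: ler_sum => i _.
  by have := sqr_ge0 (s * x i 0 - u i 0); nra.
have xB := energy_le_sqnorm x B.
rewrite xu -/s in lo.
have -> : (1 - eps) ^+ 4 = s ^+ 2 by rewrite -exprM.
nra.
Qed.

Lemma offsupport_energy_upper (S T A : {set 'I_d}) (x : 'cV[R]_d) :
  [disjoint S & T] -> supp x \subset S :|: T ->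
  (#|S| <= n)%N -> (#|T| <= n)%N -> (#|A| <= n)%N ->
  [disjoint A & S] -> [disjoint A & T] ->
  energy (Phi^T *m (Phi *m x)) A <= 8 * eps ^+ 2 * sqnorm x.
Proof.
move=> ST sx cS cT cA AS AT.
set u := Phi^T *m (Phi *m x); set W := energy u A.
have e0 := RIC_eps_gt0 HR.
set xS := Defs.restrict x S; set xT := Defs.restrict x T.
have xST : x = xS + xT.
  apply/matrixP => i j; rewrite (ord1 j) !mxE.
  case: (boolP (i \in S)) => iS; first by rewrite (disjointFr ST iS) addr0.
  rewrite add0r; case: (boolP (i \in T)) => iT //.
  have : i \notin supp x.
    by apply/negP => /(fintype.subsetP sx); rewrite inE (negbTE iS) (negbTE iT).
  by rewrite inE negbK => /eqP.
have sqx : sqnorm x = sqnorm xS + sqnorm xT.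
  rewrite {1}xST sqnormD.
  by rewrite (dotv_supp_disjoint (supp_restrict x S) (supp_restrict x T) ST) mulr0 addr0.
have cAn (X : {set 'I_d}) : (#|X| <= n)%N -> (#|A :|: X| <= 2 * n)%N.
  by move=> cX; apply: leq_trans (leq_card_setU A X).1 _; lia.
(* Test u|_A against 4 eps x = 4 eps x|_S + 4 eps x|_T; A is disjoint from S and T. *)
set a := Defs.restrict u A; set c := 4 * eps.
have sa : supp a \subset A := supp_restrict u A.
have cW : dotv (Phi *m a) (Phi *m (c *: x)) = c * W.
  by rewrite -scalemxAr (dotvC _ (c *: _)) dotvZl dotvC dotv_mulmx dotv_restrict.
have scS := fintype.subset_trans (suppZ c xS) (supp_restrict x S).
have scT := fintype.subset_trans (suppZ c xT) (supp_restrict x T).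
have nS := RIC_near_orthogonal HR sa scS AS (cAn S cS).
have nT := RIC_near_orthogonal HR sa scT AT (cAn T cT).
have splitW :
    c * W = dotv (Phi *m a) (Phi *m (c *: xS)) + dotv (Phi *m a) (Phi *m (c *: xT)).
  by rewrite -cW xST scalerDr mulmxDr dotvC dotvDl !(dotvC (Phi *m a)).
rewrite sqnorm_restrict !sqnormZ -/W in nS nT.
have : c * W <= eps * (2 * W + c ^+ 2 * sqnorm x) by rewrite sqx; lra.
rewrite /c => cWx.
have : 2 * eps * W <= 2 * eps * (8 * eps ^+ 2 * sqnorm x) by lra.
by rewrite ler_pM2l // mulr_gt0.
Qed.

Lemma romp_step_progress (v : 'cV[R]_d) (I I' : {set 'I_d}) L :
  (#|supp v| <= n)%N -> (4 * n <= 4 ^ L)%N ->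
  256 * eps ^+ 2 * L%:R <= 3 * (1 - eps) ^+ 4 ->
  (#|I :\: supp v| <= #|I :&: supp v|)%N -> romp_step Phi (Phi *m v) n I I' ->
  exists J0 : {set 'I_d}, [/\ I' = I :|: J0, [disjoint J0 & I],
     (0 < #|J0 :&: supp v|)%N & (#|J0 :\: supp v| <= #|J0 :&: supp v|)%N].
Proof.
move=> cS hL hLeps cI [r [hr [r0 [J [J0 [hid [hreg ->]]]]]]].
exists J0; set S := supp v in cS cI *.
have [e0 e1] := (RIC_eps_gt0 HR, RIC_eps_lt1 HR).
have orth := residual_orthogonal hr.
have [cJ Jsupp Jmax] := identify_max_energy hid.
have [sJ0 [cmp0 _]] := hreg.
have J0I : [disjoint J0 & I].
  apply/pred0P => i /=; apply/negbTE/andP => -[iJ0 iI].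
  have := fintype.subsetP Jsupp i (fintype.subsetP sJ0 i iJ0).
  by rewrite inE (orth i iI) eqxx.
case: hr => y [sy [rdef _]].
rewrite -mulmxBr in rdef; subst r; set x := v - y.
set u := Phi^T *m (Phi *m x) in orth Jmax Jsupp hreg cmp0 *.
have sx : supp x \subset S :|: I :=
  fintype.subset_trans (suppB v y) (finset.setUSS (subxx _) sy).
have sx' : supp x \subset S :|: (I :\: S).
  apply/fintype.subsetP => i /(fintype.subsetP sx).
  by rewrite !finset.in_setU finset.in_setD; case: (i \in S).
have x0 : 0 < sqnorm x.
  rewrite lt_def sqnorm_ge0 andbT; apply/eqP => /sqnorm_eq0 x0.
  by move/eqP: r0; apply; rewrite -/x x0 mulmx0.
have cIS : (#|I :\: S| <= n)%N.
  by apply: leq_trans cI (leq_trans (subset_leq_card (subsetIr I S)) cS).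
have lowJ : (1 - eps) ^+ 4 * sqnorm x <= energy u J.
  apply: le_trans (residual_energy_lower cS cIS sx orth) (Jmax _ _).
  exact: leq_trans (subset_leq_card (subsetDl S I)) cS.
have upA : energy u (J0 :\: S) <= 8 * eps ^+ 2 * sqnorm x.
  apply: offsupport_energy_upper sx' cS cIS _ _ _.
  - by rewrite finset.disjoints_subset; apply/fintype.subsetP => i; rewrite !inE => ->.
  - exact: leq_trans (subset_leq_card (fintype.subset_trans (subsetDl J0 S) sJ0)) cJ.
  - by rewrite finset.disjoints_subset; apply/fintype.subsetP => i; rewrite !inE => /andP[].
  - exact: fintype.disjointW (subsetDl J0 S) (subsetDl I S) J0I.
have [E0pos gap] := energy_gap e0 e1 x0 hLeps lowJ (regularize_energy cJ hL hreg) upA.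
have card2 : (2 * #|J0 :\: S| <= #|J0|)%N :=
  comparable_card_bound cmp0 (subsetDl J0 S) E0pos gap.
have J0pos : (0 < #|J0|)%N.
  rewrite lt0n cards_eq0; apply/eqP => J0e.
  by move: E0pos; rewrite J0e energy_set0 ltxx.
by split=> //; have := cardsID S J0; move: card2 J0pos; clear; lia.
Qed.

End ROMPStep.

Lemma romp_run_invariant (R : realType) N d n (Phi : 'M[R]_(N, d)) eps L (v : 'cV[R]_d)
    (Is : nat -> {set 'I_d}) k :
  RIC Phi (2 * n) eps -> sparse n v -> (4 * n <= 4 ^ L)%N ->
  256 * eps ^+ 2 * L%:R <= 3 * (1 - eps) ^+ 4 -> romp_run Phi (Phi *m v) n Is k ->
  forall i, (i <= k)%N ->
  (#|Is i :\: supp v| <= #|Is i :&: supp v|)%N /\ (i <= #|Is i :&: supp v|)%N.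
Proof.
move=> HR sv hL hLeps [Is0 steps]; elim=> [|i IH] ik.
  by rewrite Is0 finset.set0D finset.set0I cards0.
have [out_le_in i_le_in] := IH (ltnW ik).
have [J0 [-> J0I newin out_le_new]] :=
  romp_step_progress HR sv hL hLeps out_le_in (steps i ik).
have split (X Y : {set 'I_d}) :
    X \subset Is i -> Y \subset J0 -> #|X :|: Y| = (#|X| + #|Y|)%N.
  by move=> sX sY; apply/cardsU_disjoint/(fintype.disjointW sX sY); rewrite disjoint_sym.
rewrite finset.setIUl finset.setDUl !split ?subsetIl ?subsetDl //.
by move: out_le_in i_le_in newin out_le_new; clear; lia.
Qed.

Section Constants.
Variable R : realType.

Lemma ln2_ge_half : 1 / 2 <= ln (2 : R).
Proof.
have := @le_ln1Dx R (- (1 / 2)) ltac:(lra).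
have -> : (1 + - (1 / 2) : R) = 2^-1 by field.
by rewrite lnV ?posrE //; lra.
Qed.

Lemma log4_depth n : (2 <= n)%N ->
  exists L : nat, (4 * n <= 4 ^ L)%N /\ L%:R <= 4 * ln (n%:R : R).
Proof.
move=> n2; have n0 : (0 < n)%N := ltnW n2; set t := trunc_log 2 n.
have tn : (2 ^ t <= n)%N := trunc_logP (isT : (1 < 2)%N) n0.
have nt : (n < 2 ^ t.+1)%N := trunc_log_ltn n (isT : (1 < 2)%N).
exists t.+1; split.
  rewrite -[4%N]/(2 * 2)%N expnMn.
  by move: nt; move: (2 ^ t.+1)%N => P; nia.
have ln2 := ln2_ge_half.
have ln2n : ln (2 : R) <= ln (n%:R : R) by rewrite ler_ln ?posrE ?ltr0n // (ler_nat R 2 n).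
have tln : t%:R * ln (2 : R) <= ln (n%:R : R).
  rewrite mulr_natl -lnXn // -natrX.
  by rewrite ler_ln ?posrE ?ltr0n ?expn_gt0 // ler_nat.
rewrite -addn1 natrD.
have : 0 <= t%:R * (ln (2 : R) - 1 / 2) by rewrite mulr_ge0 ?ler0n //; lra.
lra.
Qed.

Lemma romp_parameters n (eps : R) :
  eps = (3%:R / 100%:R) / Num.sqrt (ln (n%:R : R)) -> 0 < eps ->
  exists L : nat, (4 * n <= 4 ^ L)%N /\ 256 * eps ^+ 2 * L%:R <= 3 * (1 - eps) ^+ 4.
Proof.
move=> epsE e0; set lam := ln (n%:R : R).
have lam0 : 0 < lam.
  rewrite -sqrtr_gt0 lt_neqAle sqrtr_ge0 andbT eq_sym; apply/eqP => lam0.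
  by move: e0; rewrite epsE -/lam lam0 invr0 mulr0 ltxx.
have n2 : (2 <= n)%N.
  rewrite ltnNge; apply/negP => n1.
  by have := @ln_le0 R n%:R; rewrite lern1 n1 -/lam => /(_ isT); lra.
have n0 : (0 < n)%N := ltnW n2.
have [L [hL Llam]] := log4_depth n2.
exists L; split=> //.
have epslam : eps ^+ 2 * lam = 9 / 10000.
  rewrite epsE -/lam expr_div_n sqr_sqrtr ?(ltW lam0) // mulfVK ?lt0r_neq0 //.
  by field.
have e2 : eps ^+ 2 <= 9 / 5000.
  have lam2 : 1 / 2 <= lam.
    by apply: le_trans ln2_ge_half _; rewrite ler_ln ?posrE ?ltr0n // (ler_nat R 2 n).
  have : 0 <= eps ^+ 2 * (lam - 1 / 2) by rewrite mulr_ge0 ?sqr_ge0 //; lra.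
  lra.
have e4 : eps <= 1 / 4 by nra.
have q : 81 / 256 <= (1 - eps) ^+ 4.
  have q2 : 9 / 16 <= (1 - eps) ^+ 2 by nra.
  have -> : (1 - eps) ^+ 4 = ((1 - eps) ^+ 2) ^+ 2 by rewrite -exprM.
  nra.
have := ler_wpM2l (sqr_ge0 eps) Llam.
rewrite -/lam; lra.
Qed.

End Constants.

Theorem theorem1p3 (R : realType) (N d n : nat) :
  (1 <= n)%N -> (1 <= d)%N ->
  forall Phi : 'M[R]_(N, d),
  RIC Phi (2 * n) ((3%:R / 100%:R) / Num.sqrt (ln (n%:R : R))) ->
  forall v : 'cV[R]_d, sparse n v ->
  (forall (Is : nat -> {set 'I_d}) (k : nat),
      romp_run Phi (Phi *m v) n Is k -> (k <= n)%N) /\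
  (forall (Is : nat -> {set 'I_d}) (k : nat),
      romp_run Phi (Phi *m v) n Is k ->
      is_residual Phi (Phi *m v) (Is k) 0 ->
      supp v \subset Is k /\ (#|Is k| <= 2 * n)%N).
Proof.
move=> _ _ Phi HR v sv.
have [L [hL hLeps]] := romp_parameters (erefl _) (RIC_eps_gt0 HR).
have inv Is k (run : romp_run Phi (Phi *m v) n Is k) :=
  romp_run_invariant HR sv hL hLeps run (leqnn k).
have cS : (#|supp v| <= n)%N := sv.
split=> [Is k run | Is k run [y [sy [ry _]]]].
  have [_ k_le] := inv Is k run.
  exact: leq_trans k_le (leq_trans (subset_leq_card (subsetIr _ _)) cS).
have [out_le_in _] := inv Is k run.
set I := Is k in sy out_le_in *.
have cIS : (#|I :&: supp v| <= n)%N := leq_trans (subset_leq_card (subsetIr _ _)) cS.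
have vy : v = y.
  apply/eqP; rewrite -subr_eq0; apply/eqP/(RIC_kernel HR); last by rewrite mulmxBr -ry.
  apply: leq_trans (subset_leq_card (fintype.subset_trans (suppB v y)
                                      (finset.setUSS (subxx _) sy))) _.
  by rewrite cardsUD; lia.
split; first by rewrite vy.
by rewrite -(cardsID (supp v) I); lia.
Qed.
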